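(* Let $\mathbb{K}$ be an arbitrary field, $A$ an $n\times n$ matrix over $\mathbb{K}$, and for $i=1,\dots,n$ let $p_i(A)=e_{n-i+1}(xE_n-A)$ be the $i$-th invariant polynomial of $A$ (so $p_n(A)\mid p_{n-1}(A)\mid\cdots\mid p_1(A)$). Let $k$ be the number of indices $i$ such that $p_i(A)$ cannot be factored into distinct linear factors over $\mathbb{K}$. Then $\mathrm{rank}_{\mathbb{K}}(E_n;A)\ge n+k$.
   Context: For a square matrix $A(x)$ over $\mathbb{K}[x]$, $d_i(A(x))$ is the (monic) greatest common divisor of the $i\times i$ minors of $A(x)$ ($d_0=1$), and the $i$-th elementary divisor (invariant factor) is $e_i(A(x))=d_i(A(x))/d_{i-1}(A(x))$ when $d_{i-1}\ne0$; thus $e_1(xE_n-A)\mid e_2(xE_n-A)\mid\cdots\mid e_n(xE_n-A)$ and their product is $\det(xE_n-A)$. $E_n$ is the identity; $(E_n;A)$ is the $n\times n\times2$ tensor with slices $E_n$ and $A$. A rank-one tensor over $\mathbb{K}$ has the form $(\alpha\,\mathbf{a}\mathbf{b}^T;\beta\,\mathbf{a}\mathbf{b}^T)$ with nonzero $\mathbf{a},\mathbf{b}\in\mathbb{K}^n$ and $(\alpha,\beta)\ne0$; $\mathrm{rank}_{\mathbb{K}}$ is the minimal number of rank-one tensors over $\mathbb{K}$ summing slicewise to the tensor. *)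

From HB Require Import structures.
From mathcomp Require Import all_boot all_order all_algebra.
Set Implicit Arguments. Unset Strict Implicit. Unset Printing Implicit Defensive.
Import Order.TTheory GRing.Theory Num.Theory.
Local Open Scope ring_scope.

(* strictly increasing index maps 'I_i -> 'I_n : choices of i rows/columns *)
Definition incr_idx (i n : nat) (f : {ffun 'I_i -> 'I_n}) : bool :=
  [forall j : 'I_i, forall j' : 'I_i, (j < j')%N ==> (f j < f j')%N].

Definition minors_gcd (K : fieldType) (n i : nat) (M : 'M[{poly K}]_n) : {poly K} :=
  \big[@gcdp K/0]_(f : {ffun 'I_i -> 'I_n} | incr_idx f)
    \big[@gcdp K/0]_(g : {ffun 'I_i -> 'I_n} | incr_idx g)
       \det (mxsub f g M).

Definition det_div (K : fieldType) (n i : nat) (M : 'M[{poly K}]_n) : {poly K} :=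
  let g := minors_gcd i M in (lead_coef g)^-1 *: g.

Definition elem_div (K : fieldType) (n i : nat) (M : 'M[{poly K}]_n) : {poly K} :=
  det_div i M %/ det_div i.-1 M.

Definition invariant_poly (K : fieldType) (n : nat) (A : 'M[K]_n) (i : nat) : {poly K} :=
  elem_div (n - i + 1) (char_poly_mx A).

Definition distinct_linear_split (K : fieldType) (p : {poly K}) : Prop :=
  exists s : seq K, uniq s /\ p = \prod_(a <- s) ('X - a%:P).

Definition rank_one_tensor (K : fieldType) (n : nat) (T : 'M[K]_n * 'M[K]_n) : Prop :=
  exists (a b : 'cV[K]_n) (alpha beta : K),
    [/\ a != 0, b != 0, (alpha, beta) != (0, 0),
        T.1 = alpha *: (a *m b^T) & T.2 = beta *: (a *m b^T)].

Definition tensor_decomp (K : fieldType) (n r : nat) (M1 M2 : 'M[K]_n) : Prop :=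
  exists T : 'I_r -> 'M[K]_n * 'M[K]_n,
    [/\ forall j, rank_one_tensor (T j),
        M1 = \sum_(j < r) (T j).1 & M2 = \sum_(j < r) (T j).2].

Definition tensor_rank_ge (K : fieldType) (n : nat) (M1 M2 : 'M[K]_n) (m : nat) : Prop :=
  forall r, tensor_decomp r M1 M2 -> (m <= r)%N.

(* k = number of i in {1..n} such that p_i(A) is not a product of distinct
   linear factors; index i : 'I_n stands for i+1 *)
Definition nonsplit_count (K : fieldType) (n : nat) (A : 'M[K]_n) (k : nat) : Prop :=
  exists S : {set 'I_n}, #|S| = k /\
    forall i : 'I_n, i \in S <-> ~ distinct_linear_split (invariant_poly A i.+1).

From HB Require Import structures.
From mathcomp Require Import all_boot all_order all_fingroup all_algebra.
Set Implicit Arguments. Unset Strict Implicit. Unset Printing Implicit Defensive.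
Import Order.TTheory GRing.Theory Num.Theory.
Local Open Scope ring_scope.

(* A decomposition of (E_n; A) into r rank-one tensors gives
   E_n = U D_al V^T and A = U D_be V^T, hence x E_n - A = U Lam V^T with Lam the
   diagonal matrix of the linear forms x al_j - be_j.  All these forms divide a
   product L of distinct linear factors, so with Lam Lam' = L E_r and the idempotent
   V^T U D_al = E_r - X0 Y0 of corank r - n we get an identity
   (x E_n - A) G = L E_n - X Y  with X of width rk <= r - n.
   Writing x E_n - A in Smith normal form P diag(s) Q, the (rk+1) x (rk+1) trailing
   block of diag(s) Q G P is congruent to L E modulo s_(n-rk-1) and singular, which
   forces s_(n-rk-1) | L.  Since the invariant polynomials are the s_i (computed
   through gcds of minors, which are invariant under unimodular equivalence), every
   p_i with i > rk divides L, so splits into distinct linear factors: k <= rk <= r - n. *)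

Section Transvection.
Variable R : comUnitRingType.

Definition transvection n (x y : 'I_n) (q : R) : 'M[R]_n := 1%:M + q *: delta_mx x y.

Lemma transvection_unit n (x y : 'I_n) q : x != y -> transvection x y q \in unitmx.
Proof.
move=> xy; suff /mulmx1_unit[] : transvection x y q *m transvection x y (- q) = 1%:M by [].
rewrite /transvection mulmxDl !mulmxDr !mul1mx !mulmx1 -!scalemxAl -!scalemxAr.
by rewrite mul_delta_mx_0 1?eq_sym // !scaler0 addr0 scaleNr subrK.
Qed.

Lemma mulmx_transvectionE m n (M : 'M[R]_(m, n)) x y q k l :
  (M *m transvection x y q) k l = M k l + q * M k x *+ (l == y).
Proof.
rewrite mulmxDr mulmx1 -scalemxAr !mxE (bigD1 x) //= big1 => [|z /negPf zx].
  by rewrite !mxE eqxx /= addr0 mulr_natr mulrnAr.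
by rewrite mxE zx mulr0.
Qed.

Lemma transvection_mulmxE m n (M : 'M[R]_(m, n)) x y q k l :
  (transvection x y q *m M) k l = M k l + q * M y l *+ (k == x).
Proof.
have -> : transvection x y q = (transvection y x q)^T.
  by rewrite /transvection raddfD /= trmx1 linearZ /= trmx_delta.
by rewrite -[M]trmxK -trmx_mul mxE mulmx_transvectionE !mxE.
Qed.

End Transvection.

Section SmithNormalForm.
Variable K : fieldType.
Local Notation P := {poly K}.

Definition diag_seq m n (d : seq P) : 'M[P]_(m, n) :=
  \matrix_(i, j) (d`_i *+ (i == j :> nat)).

Lemma diag_seqE n (d : seq P) : diag_seq n n d = diag_mx (\row_i d`_i).
Proof. by apply/matrixP => i j; rewrite !mxE. Qed.

Definition smith_form m n (M : 'M[P]_(m, n)) : Prop :=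
  exists L R (d : seq P),
    [/\ L \in unitmx, R \in unitmx, sorted (@dvdp K) d & M = L *m diag_seq m n d *m R].

Lemma smith_diag_neq0 n (M L R : 'M[P]_n) (d : seq P) :
  M = L *m diag_seq n n d *m R -> \det M != 0 -> forall a, (a < n)%N -> d`_a != 0.
Proof.
move=> -> det_neq0 a lt_an; apply: contraNneq det_neq0 => da0.
by rewrite !det_mulmx diag_seqE det_diag (bigD1 (Ordinal lt_an)) //= !mxE da0 !(mul0r, mulr0).
Qed.

Lemma smith_equiv m n (L : 'M[P]_m) (R : 'M[P]_n) (M : 'M[P]_(m, n)) :
  L \in unitmx -> R \in unitmx -> smith_form M -> smith_form (L *m M *m R).
Proof.
move=> uL uR [L' [R' [d [uL' uR' sd ->]]]].
exists (L *m L'), (R' *m R), d; split; rewrite ?unitmx_mul ?uL ?uR ?uL' ?uR' //.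
by rewrite !mulmxA.
Qed.

(* Transposition preserves the Smith form, so row and column steps are symmetric. *)
Lemma smith_tr m n (M : 'M[P]_(m, n)) : smith_form M^T -> smith_form M.
Proof.
move=> [L [R [d [uL uR sd EM]]]]; exists R^T, L^T, d; split; rewrite ?unitmx_tr //.
rewrite -[M]trmxK EM !trmx_mul mulmxA; congr (_ *m _ *m _).
by apply/matrixP => i j; rewrite !mxE eq_sym; case: eqVneq => // ->.
Qed.

Lemma smith0 m n : smith_form (0 : 'M[P]_(m, n)).
Proof.
exists 1%:M, 1%:M, [::]; split; rewrite ?unitmx1 // mulmx1 mul1mx.
by apply/matrixP => i j; rewrite !mxE nth_nil mul0rn.
Qed.

Lemma smith_scale m n a (M : 'M[P]_(m, n)) : smith_form M -> smith_form (a *: M).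
Proof.
move=> [L [R [d [uL uR sd ->]]]]; exists L, R, [seq a * x | x <- d]; split => //.
  case: d sd => //= x d; elim: d x => //= y d IHd x /andP[dv_xy /IHd ->].
  by rewrite dvdp_mul ?dvdpp.
rewrite scalemxAl scalemxAr; congr (_ *m _ *m _); apply/matrixP => i j.
rewrite !mxE mulrnAr; congr (_ *+ _).
have [lt_i_d | le_d_i] := ltnP i (size d); first by rewrite (nth_map 0).
by rewrite !nth_default ?size_map ?mulr0.
Qed.

Lemma smith_block m n (S : 'M[P]_(m, n)) :
  smith_form S -> smith_form (block_mx 1 0 0 S : 'M_(1 + m, 1 + n)).
Proof.
move=> [L [R [d [uL uR sd ->]]]].
exists (block_mx 1 0 0 L), (block_mx 1 0 0 R), (1 :: d); split.
- by rewrite unitmxE det_ublock det1 mul1r.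
- by rewrite unitmxE det_ublock det1 mul1r.
- by rewrite /= path_min_sorted //; apply/allP => g _; apply: dvd1p.
have -> : diag_seq (1 + m) (1 + n) (1 :: d) = block_mx 1 0 0 (diag_seq m n d).
  by apply/matrixP => i j; do 3?[rewrite ?mxE ?ord1 //=; case: splitP => ? ->].
by rewrite !mulmx_block !(mul0mx, mulmx0, addr0, add0r) !mulmx1.
Qed.

(* Induction step in the dimension: with a unit corner entry, row and column
   clearing leave the Schur complement. *)
Lemma smith_unit_corner m n (M : 'M[P]_(1 + m, 1 + n)) :
  ulsubmx M = 1 -> smith_form (drsubmx M - dlsubmx M *m ursubmx M) -> smith_form M.
Proof.
move=> M11 /smith_block; set S := drsubmx M - _ => SS.
have unitL : block_mx 1 0 (dlsubmx M) 1%:M \in unitmx.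
  by rewrite unitmxE det_lblock !det1 mul1r unitr1.
have unitR : block_mx 1 (ursubmx M) 0 1%:M \in unitmx.
  by rewrite unitmxE det_ublock !det1 mul1r unitr1.
have := smith_equiv unitL unitR SS.
rewrite !mulmx_block !(mul0mx, mulmx0, addr0, add0r) !mulmx1 mul1mx.
by rewrite /S mul1mx addrC subrK -M11 submxK.
Qed.

Lemma smith_unit_mull m n (M : 'M[P]_(m, n)) (U : 'M[P]_m) :
  U \in unitmx -> smith_form (U *m M) -> smith_form M.
Proof.
move=> uU /(@smith_equiv _ _ (invmx U) 1%:M).
by rewrite unitmx1 unitmx_inv mulmx1 mulKmx //; apply.
Qed.

Lemma euclid_row_step m n (M : 'M[P]_(m, n)) i i' j :
  M i j != 0 -> ~~ (M i j %| M i' j) ->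
  exists2 U : 'M[P]_m, U \in unitmx &
    (U *m M) i' j != 0 /\ (size ((U *m M) i' j) < size (M i j))%N.
Proof.
move=> nz_a a'M; have ii' : i' != i by apply: contraNneq a'M => ->; apply: dvdpp.
exists (transvection i' i (- (M i' j %/ M i j))); first exact: transvection_unit.
have -> : (transvection i' i (- (M i' j %/ M i j)) *m M) i' j = M i' j %% M i j.
  by rewrite transvection_mulmxE eqxx mulNr {1}(divp_eq (M i' j) (M i j)) addrAC subrr add0r.
by split; [apply: contraNneq a'M => /modp_eq0P | rewrite ltn_modp].
Qed.

(* If a nonzero entry divides every entry, move it to the corner, factor it out and
   recurse on the Schur complement (dimension induction hypothesis IHdim). *)
Lemma smith_divisible m n (M : 'M[P]_(m, n)) i j :
  (forall p q (S : 'M[P]_(p, q)), (p + q < m + n)%N -> smith_form S) ->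
  M i j != 0 -> (forall k l, M i j %| M k l) -> smith_form M.
Proof.
case: m n => [|m] [|n] in M i j *; try by [case: i | case: j].
move=> IHdim nz_a a_dvd; set a := M i j in nz_a a_dvd.
pose M' := tperm_mx i 0 *m M *m tperm_mx j 0.
have M'E k l : M' k l = M (tperm i 0 k) (tperm j 0 l) by rewrite /M' -xcolE -xrowE !mxE.
have swapK p (x : 'I_p.+1) : tperm_mx x 0 *m tperm_mx x 0 = 1%:M :> 'M[P]_p.+1.
  by rewrite -perm_mxM tperm2 perm_mx1.
suff /(@smith_equiv _ _ (tperm_mx i 0) (tperm_mx j 0)) : smith_form M'.
  by rewrite !unitmx_perm !mulmxA swapK mul1mx -mulmxA swapK mulmx1; apply.
clearbody M'; pose M1 : 'M[P]_(1 + m, 1 + n) := map_mx (fun x => x %/ a) M'.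
have -> : M' = a *: M1.
  by apply/matrixP => k l; rewrite [RHS]mxE [M1 k l]mxE mulrC divpK // M'E.
have corner p : lshift p (0 : 'I_1) = 0 :> 'I_p.+1 by apply: val_inj.
apply: smith_scale; apply: smith_unit_corner.
  by rewrite [ulsubmx _]mx11_scalar !mxE !corner M'E !tpermR divpp.
by apply: IHdim; rewrite addnS ltnS addSn leqnSn.
Qed.

(* Degree induction on a nonzero pivot a = M i j: if some entry of its row, of its
   column, or (after one column transvection) of the whole matrix is not divisible
   by a, a Euclidean step produces a pivot of smaller degree; otherwise a divides
   every entry. *)
Lemma smith_pivot A m n (M : 'M[P]_(m, n)) i j :
  (forall p q (S : 'M[P]_(p, q)), (p + q < m + n)%N -> smith_form S) ->
  M i j != 0 -> (size (M i j) <= A)%N -> smith_form M.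
Proof.
elim: A m n M i j => [|A IHA] m n M i j IHdim nz_a.
  by rewrite leqn0 size_poly_eq0 (negPf nz_a).
move=> le_a.
have col_case i' : ~~ (M i j %| M i' j) -> smith_form M.
  move=> a'M; have [U uU [nz_b lt_b]] := euclid_row_step nz_a a'M.
  by apply: (smith_unit_mull uU); apply: (IHA _ _ _ i' j) => //; rewrite -ltnS (leq_trans lt_b).
have row_case (M' : 'M[P]_(m, n)) i' j' j'' :
    M' i' j' != 0 -> (size (M' i' j') <= A.+1)%N -> ~~ (M' i' j' %| M' i' j'') ->
    smith_form M'.
  move=> nz_a' le_a' a'M'; apply: smith_tr.
  have := @euclid_row_step _ _ M'^T j' j'' i'; rewrite !mxE.
  case/(_ nz_a' a'M') => U uU [nz_b lt_b].
  apply: (smith_unit_mull uU); apply: (IHA _ _ _ j'' i') => //.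
    by move=> p q S; rewrite [(n + m)%N]addnC; apply: IHdim.
  by rewrite -ltnS (leq_trans lt_b).
case: (pickP (fun j' => ~~ (M i j %| M i j'))) => [j' a'M | /(_ _)/negbFE row_dvd].
  exact: (row_case M i j j').
case: (pickP (fun i' => ~~ (M i j %| M i' j))) => [i' a'M | /(_ _)/negbFE col_dvd].
  exact: col_case a'M.
case: (pickP (fun kl : 'I_m * 'I_n => ~~ (M i j %| M kl.1 kl.2))) => [[i' j'] /= a'M | all_dvd].
  have ii' : i' != i by apply: contraNneq a'M => ->.
  pose U := transvection i' i (1 - M i' j %/ M i j).
  apply: (@smith_unit_mull _ _ _ U (transvection_unit _ ii')).
  have UM_a : (U *m M) i' j = M i j.
    by rewrite transvection_mulmxE eqxx mulrBl mul1r divpK // addrC subrK.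
  apply: (row_case _ i' j j'); rewrite ?UM_a //.
  by rewrite transvection_mulmxE eqxx dvdp_addl // dvdp_mull.
by apply: (smith_divisible IHdim nz_a) => k l; have /negbFE := all_dvd (k, l).
Qed.

Theorem smith_normal_form m n (M : 'M[P]_(m, n)) : smith_form M.
Proof.
have [N] := ubnP (m + n); elim: N m n M => // N IHN m n M lt_mn.
have IHdim p q (S : 'M[P]_(p, q)) : (p + q < m + n)%N -> smith_form S.
  by move=> lt_pq; apply: IHN; apply: leq_trans lt_pq lt_mn.
case: (pickP (fun ij : 'I_m * 'I_n => M ij.1 ij.2 != 0)) => [[i j] /= nz_a | M0].
  exact: (smith_pivot IHdim nz_a (leqnn _)).
have -> : M = 0 by apply/matrixP => i j; rewrite mxE; apply/eqP/negbFE/(M0 (i, j)).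
exact: smith0.
Qed.

End SmithNormalForm.

(* Expansion of det (X Y) for X : j x n, Y : n x j over all maps 'I_j -> 'I_n
   (the first half of the Cauchy-Binet formula). *)
Lemma det_mulmx_rect (R : comNzRingType) j n (X : 'M[R]_(j, n)) (Y : 'M[R]_(n, j)) :
  \det (X *m Y) = \sum_(h : {ffun 'I_j -> 'I_n}) (\prod_i X i (h i)) * \det (rowsub h Y).
Proof.
rewrite /(\det _).
under eq_bigr => s _.
  rewrite (eq_bigr (fun i => \sum_k X i k * Y k (s i))); last by move=> i _; rewrite mxE.
  rewrite bigA_distr_bigA big_distrr /=.
  over.
rewrite exchange_big /=; apply: eq_bigr => h _.
rewrite big_distrr /=; apply: eq_bigr => s _.
rewrite big_split /= mulrCA; congr (_ * (_ * _)).
by apply: eq_bigr => i _; rewrite mxE.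
Qed.

Lemma det_rowsub_noninj (R : comNzRingType) j n (h : 'I_j -> 'I_n) (Y : 'M[R]_(n, j)) :
  ~~ injectiveb h -> \det (rowsub h Y) = 0.
Proof.
case/injectivePn => a1 [a2 a12 Eh]; apply: (determinant_alternate a12) => b.
by rewrite !mxE Eh.
Qed.

Lemma det_mulmx_thin (R : comNzRingType) k (X : 'M[R]_(k.+1, k)) (Y : 'M[R]_(k, k.+1)) :
  \det (X *m Y) = 0.
Proof.
rewrite det_mulmx_rect big1 // => h _; rewrite det_rowsub_noninj ?mulr0 //.
by apply: contraTN (ltnSn k) => /injectiveP/leq_card; rewrite !card_ord -ltnNge.
Qed.

Lemma injective_sort j n (h : 'I_j -> 'I_n) : injective h ->
  exists s : 'S_j, incr_idx [ffun i => h (s i)].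
Proof.
move=> inj_h; pose t := [tuple val (h i) | i < j].
have uniq_t : uniq t by rewrite map_inj_uniq ?enum_uniq // => x y /val_inj/inj_h.
have perm_st : perm_eq (sort leq t) t by rewrite perm_sort.
have [s Ds] := tuple_permP perm_st.
have sorted_st : sorted ltn (sort leq t).
  by rewrite ltn_sorted_uniq_leq (perm_uniq perm_st) uniq_t sort_sorted //; apply: leq_total.
have size_st : size (sort leq t) = j by rewrite (perm_size perm_st) size_tuple.
exists s; apply/forallP => a; apply/forallP => b; apply/implyP => lt_ab.
have := sorted_ltn_nth ltn_trans 0%N sorted_st a b.
rewrite !inE size_st !ltn_ord => /(_ isT isT lt_ab); rewrite Ds /= !ffunE.
have nth_enum (x : 'I_j) : nth a (enum 'I_j) x = x by exact: nth_ord_enum.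
by rewrite !(nth_map a) -?enumT ?size_enum_ord // !nth_enum !tnth_map !tnth_ord_tuple.
Qed.

Section Minors.
Variable K : fieldType.
Local Notation P := {poly K}.

Definition minors_dvd n i (d : P) (M : 'M[P]_n) : Prop :=
  forall f g : {ffun 'I_i -> 'I_n}, incr_idx f -> incr_idx g -> d %| \det (mxsub f g M).

Lemma dvdp_biggcd_seq (I : Type) (r : seq I) (Q : pred I) (F : I -> P) d :
  (d %| \big[@gcdp K/0]_(i <- r | Q i) F i) = all (fun i => Q i ==> (d %| F i)) r.
Proof.
elim: r => [|x r IHr]; first by rewrite big_nil dvdp0.
by rewrite big_cons /=; case: (Q x); rewrite /= ?dvdp_gcd IHr.
Qed.

Lemma dvdp_biggcdP (I : finType) (Q : pred I) (F : I -> P) d :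
  reflect (forall i, Q i -> d %| F i) (d %| \big[@gcdp K/0]_(i | Q i) F i).
Proof.
rewrite dvdp_biggcd_seq; apply: (iffP allP) => [d_all i Qi | d_all i _].
  by have /implyP := d_all i (mem_index_enum i); apply.
by apply/implyP/d_all.
Qed.

Lemma minors_gcdP n i (M : 'M[P]_n) d :
  reflect (minors_dvd i d M) (d %| minors_gcd i M).
Proof.
apply: (iffP (dvdp_biggcdP _ _ _)) => [d_gcd f g If Ig | d_all f If].
  by have /dvdp_biggcdP := d_gcd f If; apply.
by apply/dvdp_biggcdP => g Ig; apply: d_all.
Qed.

(* Minors of X M are combinations of minors of M (Cauchy-Binet), so divisibility
   of all minors is preserved by left multiplication. *)
Lemma minors_dvd_mull n i d (X M : 'M[P]_n) : minors_dvd i d M -> minors_dvd i d (X *m M).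
Proof.
move=> dM f g If Ig; rewrite mxsub_mul det_mulmx_rect.
apply: (big_ind (fun x => d %| x)) => [|x y|h _]; [exact: dvdp0 | exact: dvdp_add | apply: dvdp_mull].
have [/injectiveP inj_h | ninj_h] := boolP (injectiveb h); last first.
  by rewrite det_rowsub_noninj ?dvdp0.
have -> : rowsub h (colsub g M) = mxsub h g M by apply/matrixP => a b; rewrite !mxE.
have [s Is] := injective_sort inj_h.
have := dM _ _ Is Ig; rewrite (_ : mxsub _ g M = row_perm s (mxsub h g M)); last first.
  by apply/matrixP => a b; rewrite !mxE ffunE.
rewrite row_permE det_mulmx det_perm => d_det.
have sgn_unit : ((-1) ^+ s : P) \is a GRing.unit by rewrite unitrX ?unitrN1.
by rewrite -[\det _](mulKr sgn_unit) dvdp_mull.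
Qed.

Lemma minors_dvd_tr n i d (M : 'M[P]_n) : minors_dvd i d M -> minors_dvd i d M^T.
Proof.
move=> dM f g If Ig.
have -> : mxsub f g M^T = (mxsub g f M)^T by apply/matrixP => a b; rewrite !mxE.
by rewrite det_tr; apply: dM.
Qed.

Lemma minors_dvd_mulr n i d (X M : 'M[P]_n) : minors_dvd i d M -> minors_dvd i d (M *m X).
Proof.
by move=> dM; rewrite -[M *m X]trmxK trmx_mul; apply/minors_dvd_tr/minors_dvd_mull/minors_dvd_tr.
Qed.

Lemma dvdp_prod_pointwise (I : finType) (x y : I -> P) :
  (forall i, x i %| y i) -> \prod_i x i %| \prod_i y i.
Proof.
move=> xy; apply: (big_ind2 (fun a b => a %| b)) => [|a1 a2 b1 b2|i _].
- exact: dvdpp.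
- exact: dvdp_mul.
- exact: xy.
Qed.

Lemma incr_idx_ge j n (f : {ffun 'I_j -> 'I_n}) : incr_idx f -> forall a : 'I_j, (a <= f a)%N.
Proof.
move=> /forallP If [a lt_aj] /=; elim: a lt_aj => // a IHa lt_aj.
have /forallP/(_ (Ordinal lt_aj))/implyP/(_ (ltnSn a)) := If (Ordinal (ltnW lt_aj)).
by apply: leq_trans; rewrite ltnS IHa.
Qed.

Lemma sorted_dvdp_nth (s : seq P) i k : sorted (@dvdp K) s -> (i <= k)%N -> s`_i %| s`_k.
Proof.
move=> ss le_ik; have [lt_k | le_k] := ltnP k (size s); last by rewrite (nth_default _ le_k) dvdp0.
apply: (sorted_leq_nth (@dvdp_trans K) (@dvdpp K)) => //; rewrite inE //.
exact: leq_ltn_trans lt_k.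
Qed.

(* For a diagonal divisibility chain the gcd of the j x j minors is the product of
   the first j entries: the leading minor is this product and it divides all others. *)
Lemma minors_dvd_diag n (s : seq P) j d : sorted (@dvdp K) s -> (j <= n)%N ->
  minors_dvd j d (diag_seq n n s) <-> d %| \prod_(a < j) s`_a.
Proof.
move=> ss le_jn; split => [dD | d_prod f g If Ig].
  pose w : {ffun 'I_j -> 'I_n} := [ffun a => widen_ord le_jn a].
  have Iw : incr_idx w by apply/forallP => a; apply/forallP => b; rewrite !ffunE; apply/implyP.
  have := dD w w Iw Iw.
  have -> : mxsub w w (diag_seq n n s) = diag_mx (\row_(a < j) s`_a).
    by apply/matrixP => a b; rewrite !mxE !ffunE.
  by rewrite det_diag; under eq_bigr do rewrite mxE.
apply: (dvdp_trans d_prod); rewrite /(\det _).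
apply: (big_ind (fun x => _ %| x)) => [|x y|σ _]; [exact: dvdp0|exact: dvdp_add|].
apply: dvdp_mull; apply: (@dvdp_trans _ (\prod_a s`_(f a))).
  by apply: dvdp_prod_pointwise => a; apply: sorted_dvdp_nth => //; apply: incr_idx_ge.
by apply: dvdp_prod_pointwise => a; rewrite !mxE -mulr_natr dvdp_mulr.
Qed.

End Minors.

Section SmithInvariants.
Variables (K : fieldType) (n : nat) (N L R : 'M[{poly K}]_n) (s : seq {poly K}).
Hypotheses (unit_L : L \in unitmx) (unit_R : R \in unitmx) (sorted_s : sorted (@dvdp K) s).
Hypothesis N_smith : N = L *m diag_seq n n s *m R.
Hypothesis s_neq0 : forall a, (a < n)%N -> s`_a != 0.

Lemma minors_dvd_smith j d : minors_dvd j d N <-> minors_dvd j d (diag_seq n n s).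
Proof.
split => dN; last by rewrite N_smith; apply/minors_dvd_mulr/minors_dvd_mull.
have -> : diag_seq n n s = invmx L *m N *m invmx R.
  by rewrite N_smith !mulmxA mulVmx // mul1mx -mulmxA mulmxV // mulmx1.
exact/minors_dvd_mulr/minors_dvd_mull.
Qed.

Lemma det_div_smith j : (j <= n)%N ->
  det_div j N %= \prod_(a < j) s`_a /\ det_div j N \is monic.
Proof.
move=> le_jn.
have gcdE : minors_gcd j N %= \prod_(a < j) s`_a.
  apply/andP; split; last by apply/minors_gcdP/minors_dvd_smith/minors_dvd_diag.
  by apply/(minors_dvd_diag _ sorted_s le_jn)/minors_dvd_smith/minors_gcdP.
have prod_neq0 : \prod_(a < j) s`_a != 0.
  by rewrite prodf_seq_neq0; apply/allP => a _; apply/implyP => _; apply/s_neq0/leq_trans/le_jn.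
have lead_neq0 : lead_coef (minors_gcd j N) != 0.
  by rewrite lead_coef_eq0; apply: contraNneq prod_neq0 => g0; move: gcdE; rewrite g0 eqp_sym eqp0.
split; first by apply: eqp_trans gcdE; apply: eqp_scale; rewrite invr_eq0.
by apply/monicP; rewrite lead_coefZ mulVf.
Qed.

Lemma elem_div_smith j : (0 < j <= n)%N ->
  elem_div j N %= s`_j.-1 /\ elem_div j N \is monic.
Proof.
case: j => // j /= lt_jn.
have [eq1 monic1] := det_div_smith lt_jn.
have [eq0 monic0] := det_div_smith (ltnW lt_jn).
have dvd01 : det_div j N %| det_div j.+1 N.
  by rewrite (eqp_dvdl _ eq0) (eqp_dvdr _ eq1) big_ord_recr dvdp_mulIl.
have E := divpK dvd01; have neq0 : det_div j N != 0 by apply: monic_neq0.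
rewrite /elem_div /=; split.
  rewrite -(@eqp_mul2r _ (det_div j N)) // E (eqp_trans eq1) // big_ord_recr /= mulrC.
  by apply: eqp_mull; rewrite eqp_sym.
by apply/monicP; have := congr1 lead_coef E; rewrite lead_coefM (monicP monic0) (monicP monic1) mulr1.
Qed.

End SmithInvariants.

(* If B C = E_n with B : n x r, then C B = E_r - X Y with X of width at most
   r - n: the idempotent C B has rank at least n. *)
Lemma idempotent_complement_rank (K : fieldType) n r (B : 'M[K]_(n, r)) (C : 'M[K]_(r, n)) :
  B *m C = 1%:M ->
  (n <= r)%N /\ exists rk (X : 'M[K]_(r, rk)) (Y : 'M[K]_(rk, r)),
    (rk <= r - n)%N /\ C *m B = 1%:M - X *m Y.
Proof.
move=> BC1; pose Pi := C *m B.
have rank_Pi : (n <= \rank Pi)%N.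
  by apply: (@mulmx1_min_rank _ n r r Pi B C); rewrite /Pi !mulmxA BC1 mul1mx BC1.
have le_nr : (n <= r)%N := leq_trans rank_Pi (rank_leq_col _).
split => //; exists (\rank (1%:M - Pi)), (col_base (1%:M - Pi)), (row_base (1%:M - Pi)).
split; last by rewrite mulmx_base opprB addrC subrK.
have : (1%:M - Pi) *m Pi = 0.
  by rewrite mulmxBl mul1mx /Pi mulmxA -(mulmxA C) BC1 mulmx1 subrr.
move/mulmx0_rank_max; rewrite leq_subRL // addnC => /(leq_trans _); apply.
by rewrite leq_add2r.
Qed.

Lemma linear_forms_dvd_split (K : fieldType) r (al be : 'I_r -> K) :
  (forall j, (al j, be j) != (0, 0)) ->
  exists2 sq : seq K, uniq sq &
    forall j, 'X * (al j)%:P - (be j)%:P %| \prod_(c <- sq) ('X - c%:P).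
Proof.
move=> nz; exists (undup [seq be j / al j | j <- enum 'I_r & al j != 0]) => [|j].
  exact: undup_uniq.
have [al0 | al_neq0] := eqVneq (al j) 0.
  have be_neq0 : be j != 0 by move: (nz j); rewrite al0 xpair_eqE eqxx.
  by rewrite al0 mulr0 sub0r dvdpNl -[(be j)%:P]mulr1 mul_polyC dvdpZl // dvd1p.
have -> : 'X * (al j)%:P - (be j)%:P = al j *: ('X - (be j / al j)%:P).
  by rewrite scalerBr -!mul_polyC -polyCM mulrC [al j * _]mulrC divfK.
rewrite dvdpZl // (big_rem (be j / al j)) ?dvdp_mulIl //=.
by rewrite mem_undup; apply/mapP; exists j; rewrite // mem_filter al_neq0 mem_enum.
Qed.

Section Pencil.
Variable K : fieldType.
Local Notation P := {poly K}.
Local Notation "A ^pc" := (map_mx (@polyC K) A) (at level 8, format "A ^pc").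

Lemma tensor_decomp_factor n (A : 'M[K]_n) r : tensor_decomp r 1%:M A ->
  exists (U V : 'M[K]_(n, r)) (al be : 'I_r -> K),
    [/\ forall j, (al j, be j) != (0, 0),
        1%:M = U *m diag_mx (\row_j al j) *m V^T &
        A = U *m diag_mx (\row_j be j) *m V^T].
Proof.
case=> T [T_rank1 E1 E2].
pose factors j (x : 'cV[K]_n * 'cV[K]_n * K * K) :=
  [/\ x.1.1.1 != 0, x.1.1.2 != 0, (x.1.2, x.2) != (0, 0),
      (T j).1 = x.1.2 *: (x.1.1.1 *m x.1.1.2^T) & (T j).2 = x.2 *: (x.1.1.1 *m x.1.1.2^T)].
have [w Hw] : exists w, forall j, factors j (w j).
  apply: (@fin_all_exists _ (fun=> ('cV[K]_n * 'cV[K]_n * K * K)%type) factors) => j.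
  by have [a [b [al [be [? ? ? ? ?]]]]] := T_rank1 j; exists (a, b, al, be).
exists (\matrix_(i, j) (w j).1.1.1 i 0), (\matrix_(i, j) (w j).1.1.2 i 0).
exists (fun j => (w j).1.2), (fun j => (w j).2); split.
- by move=> j; have [] := Hw j.
- rewrite E1; apply/matrixP => i k; rewrite summxE mul_mx_diag !mxE.
  apply: eq_bigr => j _; have [_ _ _ -> _] := Hw j.
  by rewrite !mxE big_ord1 !mxE mulrA [_ * (w j).1.2]mulrC.
- rewrite E2; apply/matrixP => i k; rewrite summxE mul_mx_diag !mxE.
  apply: eq_bigr => j _; have [_ _ _ _ ->] := Hw j.
  by rewrite !mxE big_ord1 !mxE mulrA [_ * (w j).2]mulrC.
Qed.

Lemma char_poly_mx_pencil n r (A : 'M[K]_n) (U V : 'M[K]_(n, r)) (al be : 'I_r -> K) :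
  1%:M = U *m diag_mx (\row_j al j) *m V^T -> A = U *m diag_mx (\row_j be j) *m V^T ->
  char_poly_mx A = U^pc *m diag_mx (\row_j ('X * (al j)%:P - (be j)%:P)) *m V^T^pc.
Proof.
move=> E1 E2.
have -> : diag_mx (\row_j ('X * (al j)%:P - (be j)%:P)) =
    'X *: (diag_mx (\row_j al j))^pc - (diag_mx (\row_j be j))^pc.
  by apply/matrixP => i k; rewrite !mxE; case: (i == k); rewrite ?mulr1n ?mulr0n ?polyC0 ?mulr0 ?subr0.
rewrite mulmxBr mulmxBl -scalemxAr -scalemxAl -!map_mxM -E2 -E1.
by rewrite map_mx1 /char_poly_mx scalemx1.
Qed.

Lemma tensor_decomp_pencil n r (A : 'M[K]_n) : tensor_decomp r 1%:M A ->
  (n <= r)%N /\ exists (G : 'M[P]_n) (sq : seq K) rk (X : 'M[P]_(n, rk)) (Y : 'M[P]_(rk, n)),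
    [/\ uniq sq, (rk <= r - n)%N &
        char_poly_mx A *m G = (\prod_(c <- sq) ('X - c%:P))%:M - X *m Y].
Proof.
case/tensor_decomp_factor => U [V [al [be [nz E1 E2]]]].
set D1 := diag_mx (\row_j al j) in E1.
have [le_nr [rk [X0 [Y0 [le_rk PiE]]]]] := idempotent_complement_rank (esym E1).
split => //; have [sq uniq_sq l_dvd] := linear_forms_dvd_split nz.
set Lp := \prod_(c <- sq) ('X - c%:P) in l_dvd *.
pose l j := 'X * (al j)%:P - (be j)%:P.
pose Lam := diag_mx (\row_j l j); pose Lam' := diag_mx (\row_j (Lp %/ l j)).
have LamL : Lam *m Lam' = Lp%:M.
  rewrite mulmx_diag; apply/matrixP => i k; rewrite !mxE.
  by case: (i == k); rewrite ?mulr1n ?mulr0n // divpKC ?l_dvd.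
pose W := D1 *m V^T.
exists ((U *m D1)^pc *m Lam' *m W^pc), sq, rk, (U^pc *m Lam *m X0^pc), (Y0^pc *m Lam' *m W^pc).
split => //.
rewrite (char_poly_mx_pencil E1 E2) -/Lam.
have -> : U^pc *m Lam *m V^T^pc *m ((U *m D1)^pc *m Lam' *m W^pc) =
    U^pc *m Lam *m (V^T *m (U *m D1))^pc *m Lam' *m W^pc by rewrite !map_mxM !mulmxA.
rewrite PiE map_mxB map_mx1 map_mxM mulmxBr mulmx1 !mulmxBl.
congr (_ - _); last by rewrite !mulmxA.
rewrite -(mulmxA _ Lam) LamL -mulmxA mul_scalar_mx -scalemxAr -map_mxM /W mulmxA -E1.
by rewrite map_mx1 scalemx1.
Qed.

End Pencil.

Section Congruences.
Variable K : fieldType.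
Local Notation P := {poly K}.

Lemma prod_congr (I : finType) (x y : I -> P) t :
  (forall i, t %| x i - y i) -> t %| \prod_i x i - \prod_i y i.
Proof.
move=> xy; apply: (big_ind2 (fun a b => t %| a - b)) => [|a1 a2 b1 b2 h1 h2|i _].
- by rewrite subrr dvdp0.
- have -> : a1 * b1 - a2 * b2 = a1 * (b1 - b2) + (a1 - a2) * b2.
    by rewrite mulrBr mulrBl addrA subrK.
  by apply: dvdp_add; [apply: dvdp_mull | apply: dvdp_mulr].
- exact: xy.
Qed.

Lemma det_congr k (A B : 'M[P]_k) t :
  (forall a b, t %| A a b - B a b) -> t %| \det A - \det B.
Proof.
move=> AB; rewrite /(\det _) -sumrB.
apply: (big_ind (fun x => t %| x)) => [|x y|σ _]; [exact: dvdp0 | exact: dvdp_add |].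
by rewrite -mulrBr dvdp_mull // prod_congr.
Qed.

(* If L E - t C is singular and L != 0 then t | L: after removing g = gcd(t, L),
   t/g divides (L/g)^(k+1) while being coprime to L/g. *)
Lemma singular_scalar_congr k (C : 'M[P]_k.+1) (t L : P) :
  L != 0 -> \det (L%:M - t *: C) = 0 -> t %| L.
Proof.
move=> L_neq0 detZ; pose g := gcdp t L.
have g_neq0 : g != 0 by rewrite gcdp_eq0 negb_and L_neq0 orbT.
have tE : t = (t %/ g) * g by rewrite divpK // dvdp_gcdl.
have LE : L = (L %/ g) * g by rewrite divpK // dvdp_gcdr.
set t' := t %/ g in tE; set L' := L %/ g in LE.
have detZ' : \det (L'%:M - t' *: C) = 0.
  have ZE : L%:M - t *: C = g *: (L'%:M - t' *: C).
    by rewrite scalerBr scale_scalar_mx scalerA mulrC -LE [g * t']mulrC -tE.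
  move/eqP: detZ; rewrite ZE detZ mulf_eq0 expf_eq0 (negPf g_neq0) andbF.
  by move/eqP.
have t'_dvd : t' %| L' ^+ k.+1.
  have := @det_congr _ (L'%:M - t' *: C) L'%:M t'; rewrite detZ' det_scalar sub0r dvdpNr.
  by apply => a b; rewrite !mxE addrAC subrr add0r dvdpNr dvdp_mulr.
have : coprimep t' (L' ^+ k.+1) by rewrite coprimep_expr // coprimep_div_gcd // L_neq0 orbT.
move/(coprimep_dvdl t'_dvd); rewrite coprimepp -dvdp1 => t'_dvd1.
by rewrite tE LE dvdp_mul ?dvdpp // (dvdp_trans t'_dvd1) ?dvd1p.
Qed.

End Congruences.

(* If diag(s) H = L E_n - X Y with X of width rk < n, then s_(n-rk-1) | L: the
   trailing (rk+1)-block is singular and congruent to L E modulo s_(n-rk-1). *)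
Lemma diag_dvd_low_rank (K : fieldType) n (s : seq {poly K}) (H : 'M[{poly K}]_n) L rk
    (X : 'M[{poly K}]_(n, rk)) (Y : 'M[{poly K}]_(rk, n)) :
  sorted (@dvdp K) s -> (rk < n)%N -> L != 0 ->
  diag_seq n n s *m H = L%:M - X *m Y -> s`_(n - rk.+1) %| L.
Proof.
move=> sorted_s lt_rkn L_neq0 EQ; set t := s`_(n - rk.+1).
have f_lt (a : 'I_rk.+1) : (n - rk.+1 + a < n)%N by rewrite -{2}(subnK lt_rkn) ltn_add2l.
pose f (a : 'I_rk.+1) : 'I_n := Ordinal (f_lt a).
have inj_f : injective f by move=> a b [] /eqP; rewrite eqn_add2l => /eqP /val_inj.
pose C := \matrix_(a, b) (s`_(f a) %/ t * H (f a) (f b)).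
apply: (@singular_scalar_congr _ _ C _ _ L_neq0).
have XYE : X *m Y = L%:M - diag_mx (\row_i s`_i) *m H.
  by rewrite -diag_seqE EQ opprB addrC subrK.
have -> : L%:M - t *: C = rowsub f X *m colsub f Y.
  apply/matrixP => a b; rewrite -mxsub_mul [RHS]mxE XYE mul_diag_mx !mxE (inj_eq inj_f).
  by rewrite mulrA [t * _]mulrC divpK //; apply: sorted_dvdp_nth; rewrite //= leq_addr.
exact: det_mulmx_thin.
Qed.

Lemma invariant_poly_dvd_pencil (K : fieldType) n (A : 'M[K]_n) (G : 'M[{poly K}]_n) L rk
    (X : 'M[{poly K}]_(n, rk)) (Y : 'M[{poly K}]_(rk, n)) :
  L != 0 -> char_poly_mx A *m G = L%:M - X *m Y ->
  forall i : 'I_n, (rk <= i)%N -> invariant_poly A i.+1 \is monic /\ invariant_poly A i.+1 %| L.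
Proof.
move=> L_neq0 NG i le_rk_i; set N := char_poly_mx A in NG.
have [Pm [Qm [d [unit_P unit_Q sorted_d NE]]]] := smith_normal_form N.
have d_neq0 := smith_diag_neq0 NE (monic_neq0 (char_poly_monic A)).
have lt_rkn : (rk < n)%N := leq_ltn_trans le_rk_i (ltn_ord i).
have DE : diag_seq n n d *m (Qm *m G *m Pm) = L%:M - (invmx Pm *m X) *m (Y *m Pm).
  have -> : diag_seq n n d = invmx Pm *m N *m invmx Qm.
    by rewrite NE !mulmxA mulVmx // mul1mx -mulmxA mulmxV // mulmx1.
  rewrite !mulmxA -[_ *m invmx Qm *m Qm]mulmxA mulVmx // mulmx1 -(mulmxA _ N G) NG.
  by rewrite mulmxBr mulmxBl scalar_mxC -(mulmxA _ (invmx Pm)) mulVmx // mulmx1 !mulmxA.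
have ni_range : (0 < n - i <= n)%N by rewrite subn_gt0 ltn_ord leq_subr.
have [pE p_monic] := elem_div_smith unit_P unit_Q sorted_d NE d_neq0 ni_range.
rewrite /invariant_poly addn1 subnSK //; split => //.
rewrite (eqp_dvdl _ pE) (dvdp_trans _ (diag_dvd_low_rank sorted_d lt_rkn L_neq0 DE)) //.
by apply: sorted_dvdp_nth; rewrite // -subnS leq_sub2l.
Qed.

Lemma distinct_linear_split_dvd (K : fieldType) (e : {poly K}) (sq : seq K) :
  uniq sq -> e \is monic -> e %| \prod_(c <- sq) ('X - c%:P) -> distinct_linear_split e.
Proof.
move=> uniq_sq monic_e /(@dvdp_prod_XsubC _ _ sq id) [m Em].
exists (mask m sq); split; first exact: mask_uniq.
by apply/eqP; rewrite -eqp_monic // monic_prod_XsubC.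
Qed.

Lemma card_ord_bounded n m (S : {set 'I_n}) : (forall i, i \in S -> (i < m)%N) -> (#|S| <= m)%N.
Proof.
move=> S_lt; have [le_nm | lt_mn] := leqP n m.
  by apply: leq_trans (max_card _) _; rewrite card_ord.
have /subset_leq_card : S \subset [set widen_ord (ltnW lt_mn) i | i : 'I_m].
  by apply/subsetP => i iS; apply/imsetP; exists (Ordinal (S_lt i iS)); last apply: val_inj.
by rewrite card_imset ?card_ord // => a b /(congr1 val) /= /val_inj.
Qed.

Theorem mainTheorem11 (K : fieldType) (n : nat) (A : 'M[K]_n) (k : nat) :
  nonsplit_count A k -> tensor_rank_ge 1%:M A (n + k)%N.
Proof.
case=> S [card_S S_nonsplit] r /tensor_decomp_pencil [le_nr [G [sq [rk [X [Y [uniq_sq le_rk NG]]]]]]].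
have L_neq0 : \prod_(c <- sq) ('X - c%:P) != 0 by apply/monic_neq0/monic_prod_XsubC.
rewrite -(subnKC le_nr) leq_add2l -card_S; apply: card_ord_bounded => i /S_nonsplit.
rewrite ltnNge; apply: contra_notN => le_i.
have [p_monic p_dvd] := invariant_poly_dvd_pencil L_neq0 NG (leq_trans le_rk le_i).
exact: distinct_linear_split_dvd uniq_sq p_monic p_dvd.
Qed.
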